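(* Let $\Lambda:\mathbb{R}_{\geq1}\to\mathbb{R}_{\geq1}$ be non-decreasing with $\lim_{x\to\infty}\Lambda(x)=\infty$. Then there exists $\varphi\in\Phi$ such that $\mathscr{L}^{s,\Lambda}\subseteq\mathscr{L}_{\varphi}$. Furthermore, there exists $\psi\in\Phi$ such that $\mathscr{L}^{s,\Lambda}\subseteq\mathscr{L}^{ss,\Lambda}\subseteq\mathscr{L}_{\psi}^{\ast}$.
   Context: $\mathscr{L}$ is the set of Liouville numbers (real irrational $\zeta$ such that for every $\eta>0$ there are infinitely many rationals $y/x$, $x\geq1$, with $|\zeta-y/x|\leq x^{-\eta}$). $\Vert\alpha\Vert$ is the distance from $\alpha$ to the nearest integer. $\Phi$ is the set of non-decreasing $\varphi:\mathbb{R}_{\geq 2}\to\mathbb{R}_{\geq 2}$ with $\varphi(x)\to\infty$. For $\varphi\in\Phi$, $\mathscr{L}_{\varphi}$ is the set of $\zeta\in\mathscr{L}$ such that for every positive integer $N$ there is an integer $q$ with $2\leq q\leq\varphi(N)$ and $\Vert q\zeta\Vert\leq q^{-N}$; $\mathscr{L}_{\varphi}^{\ast}$ is the set of $\zeta\in\mathscr{L}$ for which this holds for all $N\geq N_0(\zeta)$. For $\zeta\in\mathscr{L}$ let $s_n/t_n$ ($n\geq0$) be its continued fraction convergents. $\zeta$ is semi-strong if there is a strictly increasing sequence $(v_i)_{i\geq0}$ of non-negative integers such that, defining $\omega(v_i)$ by $|t_{v_i}\zeta-s_{v_i}|=t_{v_i}^{-\omega(v_i)}$, one has $\lim_{i\to\infty}\omega(v_i)=\infty$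 and $\limsup_{i\to\infty}\frac{\log t_{v_{i+1}}}{\log t_{v_i+1}}<\infty$. $\zeta$ is strong if $\lim_{i\to\infty}\omega(i)=\infty$ with $v_i=i$. $\mathscr{L}^{ss,\Lambda}$ (resp. $\mathscr{L}^{s,\Lambda}$) is the set of semi-strong (resp. strong) $\zeta$ for which a sequence $(v_i)$ as in the respective definition can be chosen with $\omega(v_i)\geq\Lambda(i)$ for all $i\geq1$. *)

From Stdlib Require Import Reals ZArith Lra List.
Open Scope R_scope.

Definition dist_int (a : R) : R :=
  Rmin (a - IZR (Int_part a)) (IZR (Int_part a) + 1 - a).

Definition irrational (z : R) : Prop :=
  forall (p q : Z), q <> 0%Z -> z <> IZR p / IZR q.

(* Liouville numbers: irrational, and for every eta > 0 the set of rationals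
   y/x (x >= 1) with |z - y/x| <= x^(-eta) is infinite (i.e. not contained in
   any finite list of reals). *)
Definition Liouville (z : R) : Prop :=
  irrational z /\
  forall eta : R, 0 < eta ->
    forall l : list R, exists (x y : Z), (1 <= x)%Z /\
      Rabs (z - IZR y / IZR x) <= Rpower (IZR x) (- eta) /\
      ~ In (IZR y / IZR x) l.

(* Phi: functions R_{>=2} -> R_{>=2}, non-decreasing, tending to infinity
   (represented as R -> R, constrained on [2, oo)). *)
Definition InPhi (phi : R -> R) : Prop :=
  (forall x, 2 <= x -> 2 <= phi x) /\
  (forall x y, 2 <= x -> x <= y -> phi x <= phi y) /\
  (forall M, exists X, 2 <= X /\ forall x, X <= x -> M <= phi x).

(* phi evaluated at the positive integer N; N = 1 lies outside the domain
   R_{>=2} of phi, so we evaluate at max(N,2). *)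
Definition phi_at (phi : R -> R) (N : nat) : R := phi (Rmax (INR N) 2).

Definition good_q (phi : R -> R) (z : R) (N : nat) : Prop :=
  exists q : Z, (2 <= q)%Z /\ IZR q <= phi_at phi N /\
    dist_int (IZR q * z) <= / (IZR q ^ N).

Definition L_phi (phi : R -> R) (z : R) : Prop :=
  Liouville z /\ forall N : nat, (1 <= N)%nat -> good_q phi z N.

Definition L_phi_star (phi : R -> R) (z : R) : Prop :=
  Liouville z /\ exists N0 : nat, forall N : nat,
    (1 <= N)%nat -> (N0 <= N)%nat -> good_q phi z N.

Fixpoint cf_rem (z : R) (n : nat) : R :=
  match n with
  | O => z
  | S m => let r := cf_rem z m in / (r - IZR (Int_part r))
  end.

Definition cf_a (z : R) (n : nat) : Z := Int_part (cf_rem z n).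

(* (p_n, q_n), (p_{n-1}, q_{n-1}) with p_{-1} = 1, q_{-1} = 0 *)
Fixpoint cf_pq (z : R) (n : nat) : (Z * Z) * (Z * Z) :=
  match n with
  | O => ((cf_a z 0, 1%Z), (1%Z, 0%Z))
  | S m =>
      let '((p, q), (p', q')) := cf_pq z m in
      let a := cf_a z (S m) in
      ((a * p + p', a * q + q')%Z, (p, q))
  end.

Definition cf_s (z : R) (n : nat) : Z := fst (fst (cf_pq z n)).
Definition cf_t (z : R) (n : nat) : Z := snd (fst (cf_pq z n)).

(* omega(n) defined by |t_n z - s_n| = t_n^(-omega(n)), i.e.
   omega(n) = - ln |t_n z - s_n| / ln t_n.  (When t_n = 1 no such omega exists;
   the formula then gives 0 since / 0 = 0 in Stdlib.) *)
Definition cf_omega (z : R) (n : nat) : R :=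
  - ln (Rabs (IZR (cf_t z n) * z - IZR (cf_s z n))) / ln (IZR (cf_t z n)).

Definition strictly_incr (v : nat -> nat) : Prop :=
  forall i, (v i < v (S i))%nat.

Definition tends_to_infty (u : nat -> R) : Prop :=
  forall M, exists i0, forall i, (i0 <= i)%nat -> M <= u i.

(* limsup_i log t_{v_{i+1}} / log t_{v_i + 1} < oo *)
Definition limsup_finite_cond (z : R) (v : nat -> nat) : Prop :=
  exists C : R, exists i0 : nat, forall i, (i0 <= i)%nat ->
    ln (IZR (cf_t z (v (S i)))) <= C * ln (IZR (cf_t z (S (v i)))).

Definition semi_strong_seq (z : R) (v : nat -> nat) : Prop :=
  strictly_incr v /\ tends_to_infty (fun i => cf_omega z (v i)) /\
  limsup_finite_cond z v.

Definition semi_strong (z : R) : Prop :=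
  Liouville z /\ exists v, semi_strong_seq z v.

Definition strong (z : R) : Prop :=
  Liouville z /\ tends_to_infty (cf_omega z).

Definition L_ss_Lambda (Lam : R -> R) (z : R) : Prop :=
  Liouville z /\ exists v, semi_strong_seq z v /\
    forall i, (1 <= i)%nat -> Lam (INR i) <= cf_omega z (v i).

Definition L_s_Lambda (Lam : R -> R) (z : R) : Prop :=
  strong z /\ forall i, (1 <= i)%nat -> Lam (INR i) <= cf_omega z i.

From Stdlib Require Import Reals ZArith Lra Lia ClassicalEpsilon.
Open Scope R_scope.

(* If [omega(n) >= N] then [q = t_n] satisfies [||q z|| <= q^(-N)], so everything
   hinges on bounding [t_n] in terms of [N] alone.  From [|t_n z - s_n| t_(n+1) <= 1]
   one gets [ln t_(n+1) <= omega(n) ln t_n]: while [omega] stays below [N], the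
   logarithms of the denominators grow at most geometrically with ratio [N] (ratio
   [(|C|+1) N] along a semi-strong sequence), and [omega(v_i) >= Lam(i)] caps the
   number of such steps by an index depending only on [N]. *)

Lemma ln_le x y : 0 < x -> x <= y -> ln x <= ln y.
Proof.
  intros Hx [Hxy | <-]; [left; apply ln_increasing|]; lra.
Qed.

Lemma exp_le x y : x <= y -> exp x <= exp y.
Proof.
  intros [Hxy | <-]; [left; apply exp_increasing|]; lra.
Qed.

Lemma dist_int_le_Rabs x (s : Z) : dist_int x <= Rabs (x - IZR s).
Proof.
  unfold dist_int. pose proof (base_Int_part x) as [Hlo Hhi].
  destruct (Z_le_gt_dec s (Int_part x)) as [Hs | Hs].
  - apply IZR_le in Hs.
    eapply Rle_trans; [apply Rmin_l|]. rewrite Rabs_right; lra.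
  - assert (IZR (Int_part x) + 1 <= IZR s) by (rewrite <- plus_IZR; apply IZR_le; lia).
    eapply Rle_trans; [apply Rmin_r|]. rewrite Rabs_left1; lra.
Qed.

Definition cf_err (z : R) (n : nat) : R :=
  Rabs (IZR (cf_t z n) * z - IZR (cf_s z n)).

Section ContinuedFraction.

Variable z : R.
Hypothesis z_irr : irrational z.

Lemma cf_pq_invariant n : forall p q p' q',
  cf_pq z n = ((p, q), (p', q')) ->
  (1 <= q)%Z /\ (0 <= q')%Z /\ (p * q' - p' * q = 1 \/ p * q' - p' * q = -1)%Z /\
  1 < cf_rem z (S n) /\
  z = (IZR p * cf_rem z (S n) + IZR p') / (IZR q * cf_rem z (S n) + IZR q').
Proof.
  induction n as [|n IH]; intros p q p' q' E.
  - simpl in E. injection E as <- <- <- <-.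
    pose proof (base_Int_part z) as [Hlo Hhi].
    assert (Hfrac : z - IZR (Int_part z) <> 0).
    { intro H0. apply (z_irr (Int_part z) 1%Z); [lia|]. field_simplify; lra. }
    change (cf_rem z 1) with (/ (z - IZR (Int_part z))).
    unfold cf_a, cf_rem.
    split; [lia|split; [lia|split; [lia|split]]].
    + rewrite <- Rinv_1. apply Rinv_lt_contravar; lra.
    + field. lra.
  - cbn [cf_pq] in E. destruct (cf_pq z n) as [[p0 q0] [p0' q0']] eqn:E0.
    injection E as <- <- <- <-.
    destruct (IH _ _ _ _ eq_refl) as [Hq [Hq' [Hdet [Hr Hz]]]].
    set (r := cf_rem z (S n)) in *.
    change (cf_rem z (S (S n))) with (/ (r - IZR (Int_part r))).
    change (cf_a z (S n)) with (Int_part r).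
    set (a := Int_part r).
    pose proof (base_Int_part r) as [Hlo Hhi]. fold a in Hlo, Hhi.
    assert (Hq1 : 1 <= IZR q0) by (apply IZR_le; lia).
    assert (Hq0' : 0 <= IZR q0') by (apply IZR_le; lia).
    assert (Ha1 : (1 <= a)%Z) by (assert (Ha : 0 < IZR a) by lra; apply lt_0_IZR in Ha; lia).
    assert (Hfrac : r - IZR a <> 0).
    { intro H0. apply (z_irr (p0 * a + p0')%Z (q0 * a + q0')%Z); [nia|].
      rewrite Hz, !plus_IZR, !mult_IZR. replace r with (IZR a) by lra. reflexivity. }
    split; [nia|split; [lia|split; [lia|split]]].
    + rewrite <- Rinv_1. apply Rinv_lt_contravar; lra.
    + rewrite Hz at 1. rewrite !plus_IZR, !mult_IZR. field.
      split; [lra|nra].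
Qed.

(* [|t_n z - s_n| = 1 / (t_n r_(n+1) + t_(n-1))] and [t_(n+1) <= t_n r_(n+1) + t_(n-1)]. *)
Lemma cf_err_bounds n :
  1 <= IZR (cf_t z n) /\ 0 < cf_err z n /\
  1 <= IZR (cf_t z (S n)) /\ cf_err z n * IZR (cf_t z (S n)) <= 1.
Proof.
  unfold cf_err, cf_t, cf_s. cbn [cf_pq].
  destruct (cf_pq z n) as [[p q] [p' q']] eqn:E0. simpl.
  destruct (cf_pq_invariant n _ _ _ _ E0) as [Hq [Hq' [Hdet [Hr Hz]]]].
  change (cf_a z (S n)) with (Int_part (cf_rem z (S n))).
  set (r := cf_rem z (S n)) in *. set (a := Int_part r).
  pose proof (base_Int_part r) as [Hlo Hhi]. fold a in Hlo, Hhi.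
  assert (Hq1 : 1 <= IZR q) by (apply IZR_le; lia).
  assert (Hq0' : 0 <= IZR q') by (apply IZR_le; lia).
  assert (Ha1 : (1 <= a)%Z) by (assert (Ha : 0 < IZR a) by lra; apply lt_0_IZR in Ha; lia).
  assert (Hden : 0 < IZR q * r + IZR q') by nra.
  assert (Herr : Rabs (IZR q * z - IZR p) = / (IZR q * r + IZR q')).
  { replace (IZR q * z - IZR p) with (IZR (q * p' - p * q') / (IZR q * r + IZR q'))
      by (rewrite Hz, minus_IZR, !mult_IZR; field; lra).
    unfold Rdiv. rewrite Rabs_mult, Rabs_inv, (Rabs_right (IZR q * r + IZR q')) by lra.
    replace (Rabs (IZR (q * p' - p * q'))) with 1; [lra|].
    destruct Hdet as [Hd | Hd].
    - replace (q * p' - p * q')%Z with (-1)%Z by lia. rewrite Rabs_left; simpl; lra.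
    - replace (q * p' - p * q')%Z with 1%Z by lia. rewrite Rabs_right; lra. }
  rewrite Herr.
  assert (Ht : IZR (a * q + q') <= IZR q * r + IZR q') by (rewrite plus_IZR, mult_IZR; nra).
  assert (Ht1 : 1 <= IZR (a * q + q')) by (apply IZR_le; nia).
  split; [lra|split; [apply Rinv_0_lt_compat; lra|split; [lra|]]].
  apply Rmult_le_reg_l with (IZR q * r + IZR q'); [lra|].
  rewrite <- Rmult_assoc, Rinv_r by lra. lra.
Qed.

Lemma ln_cf_t_ge0 n : 0 <= ln (IZR (cf_t z n)).
Proof.
  destruct (cf_err_bounds n) as [Ht _]. rewrite <- ln_1. apply ln_le; lra.
Qed.

(* When [t_n = 1] the quotient defining [cf_omega] is [_ / 0 = 0]. *)
Lemma cf_t_ge2_of_omega_pos n : 0 < cf_omega z n -> (2 <= cf_t z n)%Z.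
Proof.
  intros Hw. destruct (cf_err_bounds n) as [Ht _].
  destruct (Z.eq_dec (cf_t z n) 1) as [Heq | Hne].
  - unfold cf_omega in Hw. rewrite Heq, ln_1, Rdiv_0_r in Hw. lra.
  - apply le_IZR in Ht. lia.
Qed.

Lemma cf_omega_mul_ln n : 0 < cf_omega z n ->
  cf_omega z n * ln (IZR (cf_t z n)) = - ln (cf_err z n).
Proof.
  intros Hw. pose proof (IZR_le _ _ (cf_t_ge2_of_omega_pos n Hw)) as Ht.
  assert (0 < ln (IZR (cf_t z n))) by (rewrite <- ln_1; apply ln_increasing; lra).
  unfold cf_omega, cf_err. field. lra.
Qed.

Lemma ln_cf_t_succ_le n : 0 < cf_omega z n ->
  ln (IZR (cf_t z (S n))) <= cf_omega z n * ln (IZR (cf_t z n)).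
Proof.
  intros Hw. rewrite cf_omega_mul_ln by exact Hw.
  destruct (cf_err_bounds n) as [_ [He [Ht' Hm]]].
  rewrite <- ln_Rinv by lra. apply ln_le; [lra|].
  apply Rmult_le_reg_l with (cf_err z n); [lra|]. rewrite Rinv_r; lra.
Qed.

Lemma cf_err_le_of_omega n (N : nat) : (1 <= N)%nat -> INR N <= cf_omega z n ->
  cf_err z n <= / IZR (cf_t z n) ^ N.
Proof.
  intros HN Hw. assert (HN1 : 1 <= INR N) by (apply (le_INR 1); exact HN).
  assert (Heq := cf_omega_mul_ln n ltac:(lra)).
  pose proof (IZR_le _ _ (cf_t_ge2_of_omega_pos n ltac:(lra))) as Ht.
  destruct (cf_err_bounds n) as [_ [He _]].
  assert (Htp : 0 < IZR (cf_t z n) ^ N) by (apply pow_lt; lra).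
  rewrite <- (exp_ln (cf_err z n)), <- (exp_ln (/ _)) by (try apply Rinv_0_lt_compat; lra).
  apply exp_le. rewrite ln_Rinv, ln_pow by lra.
  pose proof (ln_cf_t_ge0 n). nra.
Qed.

(* Since [t_0 = 1], a huge [t_1] forces [z] very close to the integer [s_0]. *)
Lemma dist_int_two_mul_le (N : nat) : 2 ^ S N <= IZR (cf_t z 1) ->
  dist_int (2 * z) <= / 2 ^ N.
Proof.
  intros Hbig. destruct (cf_err_bounds 0) as [_ [He [_ Hm]]].
  unfold cf_err in He, Hm. change (cf_t z 0) with 1%Z in He, Hm.
  eapply Rle_trans; [apply (dist_int_le_Rabs _ (2 * cf_s z 0))|].
  rewrite mult_IZR.
  replace (2 * z - IZR 2 * IZR (cf_s z 0)) with (2 * (IZR 1 * z - IZR (cf_s z 0))) by (simpl; ring).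
  rewrite Rabs_mult, (Rabs_right 2) by lra.
  assert (Hp : 0 < 2 ^ N) by (apply pow_lt; lra).
  simpl in Hbig. apply Rmult_le_reg_r with (2 ^ N); [lra|]. rewrite Rinv_l by lra. nra.
Qed.

End ContinuedFraction.

Lemma hit_with_geometric_bound (L w : nat -> R) (B L0 N : R) (i1 k : nat) :
  1 <= B -> 0 <= L0 -> L i1 <= L0 ->
  (forall j, (i1 <= j)%nat -> w j < N -> L (S j) <= B * L j) ->
  (forall j, (i1 + k <= j)%nat -> N <= w j) ->
  exists j, (i1 <= j)%nat /\ N <= w j /\ L j <= B ^ k * L0.
Proof.
  intros HB HL0 Hstart Hstep Hhit.
  assert (Hind : forall m, (exists j, (i1 <= j)%nat /\ N <= w j /\ L j <= B ^ m * L0)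
                           \/ L (i1 + m)%nat <= B ^ m * L0).
  { induction m as [|m [[j [Hj [Hwj HLj]]] | HL]].
    - right. rewrite Nat.add_0_r. simpl. lra.
    - left. exists j. repeat split; [exact Hj|exact Hwj|].
      assert (0 <= B ^ m * L0) by (apply Rmult_le_pos; [apply pow_le; lra|lra]).
      simpl. nra.
    - assert (0 <= B ^ m * L0) by (apply Rmult_le_pos; [apply pow_le; lra|lra]).
      destruct (Rlt_le_dec (w (i1 + m)%nat) N) as [Hlt | Hge].
      + right. rewrite Nat.add_succ_r. simpl.
        apply Rle_trans with (B * L (i1 + m)%nat); [apply Hstep; [lia|exact Hlt]|].
        rewrite Rmult_assoc. apply Rmult_le_compat_l; lra.
      + left. exists (i1 + m)%nat. repeat split; [lia|exact Hge|]. simpl. nra. }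
  destruct (Hind k) as [H | H]; [exact H|].
  exists (i1 + k)%nat. repeat split; [lia|apply Hhit; lia|exact H].
Qed.

Lemma pow_mul_le_succ_pow (B L0 x : R) (k : nat) :
  0 <= B <= (x + 1) ^ 2 -> 0 <= L0 <= x + 1 -> B ^ k * L0 <= (x + 1) ^ (2 * k + 1).
Proof.
  intros HB HL0. rewrite pow_add, pow_mult, pow_1.
  apply Rmult_le_compat; [apply pow_le; lra|lra|apply pow_incr; lra|lra].
Qed.

Fixpoint prefix_max (f : nat -> nat) (n : nat) : nat :=
  match n with
  | O => f O
  | S m => Nat.max (prefix_max f m) (f (S m))
  end.

Lemma le_prefix_max f n : (f n <= prefix_max f n)%nat.
Proof. destruct n; simpl; lia. Qed.

Lemma monotone_threshold (P : nat -> nat -> Prop) :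
  (forall n, exists k, P n k) ->
  (forall n k k', (k <= k')%nat -> P n k -> P n k') ->
  exists K : nat -> nat, (forall n, (K n <= K (S n))%nat) /\ (forall n, P n (K n)).
Proof.
  intros Hex Hup. destruct (choice P Hex) as [f Hf].
  exists (prefix_max f). split.
  - intro n. simpl. lia.
  - intro n. apply Hup with (f n); [apply le_prefix_max|apply Hf].
Qed.

Definition floor_step (G : nat -> R) (x : R) : R := G (Z.to_nat (Zfloor x)).

Lemma InPhi_floor_step (G : nat -> R) :
  Un_growing G -> (forall n, 2 <= G n) -> (forall n, INR n <= G n) ->
  InPhi (floor_step G).
Proof.
  intros Hmono H2 Hid. unfold floor_step. split; [|split].
  - intros x _. apply H2.
  - intros x y _ Hxy. apply Rge_le, growing_prop; [exact Hmono|].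
    apply Zfloor_le in Hxy. lia.
  - intros M. exists (Rmax 2 (M + 1)). split; [apply Rmax_l|].
    intros x Hx. pose proof (Rmax_l 2 (M + 1)). pose proof (Rmax_r 2 (M + 1)).
    pose proof (Zfloor_bound x) as [_ Hfl].
    eapply Rle_trans; [|apply Hid].
    rewrite INR_IZR_INZ, Z2Nat.id; [lra|].
    apply Zfloor_lub. simpl. lra.
Qed.

Lemma floor_step_at_ge (G : nat -> R) (N : nat) : Un_growing G ->
  G N <= phi_at (floor_step G) N.
Proof.
  intros Hmono. unfold phi_at, floor_step. apply Rge_le, growing_prop; [exact Hmono|].
  assert (Hfl : (Z.of_nat N <= Zfloor (Rmax (INR N) 2))%Z).
  { apply Zfloor_lub. rewrite <- INR_IZR_INZ. apply Rmax_l. }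
  lia.
Qed.

Lemma L_s_Lambda_sub_L_ss_Lambda (Lam : R -> R) z : L_s_Lambda Lam z -> L_ss_Lambda Lam z.
Proof.
  intros [[HL Htend] Hlam]. split; [exact HL|].
  exists (fun i => i). split; [|exact Hlam].
  split; [intro i; lia|split; [exact Htend|]].
  exists 1, 0%nat. intros i _. lra.
Qed.

Section Construction.

Variable Lam : R -> R.
Hypothesis Lam_ge1 : forall x, 1 <= x -> 1 <= Lam x.
Variable K : nat -> nat.
Hypothesis K_mono : forall n, (K n <= K (S n))%nat.
Hypothesis K_spec : forall n x, INR (K n) <= x -> INR n <= Lam x.

(* [K N] bounds the index at which [Lam] reaches [N], so [ln t] of the first
   good convergent is at most [(N+1)^(2 K N + 1)]. *)
Definition height_bound (n : nat) : R := exp ((INR n + 1) ^ (2 * K n + 1)) + 2.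

Lemma height_bound_growing : Un_growing height_bound.
Proof.
  intro n. unfold height_bound. rewrite S_INR. pose proof (pos_INR n).
  apply Rplus_le_compat_r, exp_le.
  apply Rle_trans with ((INR n + 1) ^ (2 * K (S n) + 1)).
  - apply Rle_pow; [lra|]. specialize (K_mono n). lia.
  - apply pow_incr; lra.
Qed.

Lemma InPhi_height_bound : InPhi (floor_step height_bound).
Proof.
  apply InPhi_floor_step; [exact height_bound_growing| |];
    intro n; unfold height_bound; pose proof (pos_INR n).
  - pose proof (exp_pos ((INR n + 1) ^ (2 * K n + 1))). lra.
  - assert (INR n + 1 <= (INR n + 1) ^ (2 * K n + 1)).
    { rewrite <- (pow_1 (INR n + 1)) at 1. apply Rle_pow; [lra|lia]. }
    pose proof (exp_ineq1_le ((INR n + 1) ^ (2 * K n + 1))). lra.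
Qed.

Lemma good_q_of_convergent z n (N : nat) : irrational z -> (1 <= N)%nat ->
  INR N <= cf_omega z n -> ln (IZR (cf_t z n)) <= (INR N + 1) ^ (2 * K N + 1) ->
  good_q (floor_step height_bound) z N.
Proof.
  intros Hirr HN Hw Hln. assert (HN1 : 1 <= INR N) by (apply (le_INR 1); exact HN).
  pose proof (cf_t_ge2_of_omega_pos z Hirr n ltac:(lra)) as Ht.
  exists (cf_t z n). split; [exact Ht|split].
  - eapply Rle_trans; [|apply floor_step_at_ge, height_bound_growing].
    unfold height_bound. rewrite <- (exp_ln (IZR (cf_t z n))) by (apply IZR_lt; lia).
    pose proof (exp_le _ _ Hln). lra.
  - eapply Rle_trans; [apply dist_int_le_Rabs|].
    exact (cf_err_le_of_omega z Hirr n N HN Hw).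
Qed.

Lemma omega_ge_of_threshold z (v : nat -> nat) (N j : nat) :
  (forall i, (1 <= i)%nat -> Lam (INR i) <= cf_omega z (v i)) ->
  (1 <= j)%nat -> (K N <= j)%nat -> INR N <= cf_omega z (v j).
Proof.
  intros Hlam Hj HKj. eapply Rle_trans; [|apply Hlam, Hj].
  apply K_spec, le_INR, HKj.
Qed.

Lemma omega_pos z (v : nat -> nat) j :
  (forall i, (1 <= i)%nat -> Lam (INR i) <= cf_omega z (v i)) ->
  (1 <= j)%nat -> 0 < cf_omega z (v j).
Proof.
  intros Hlam Hj. pose proof (Lam_ge1 (INR j) ltac:(apply (le_INR 1); exact Hj)).
  pose proof (Hlam j Hj). lra.
Qed.

(* Either [t_1 >= 2^(N+1)] and [q = 2] works, or [ln t_1 <= N + 1] starts the growth. *)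
Lemma L_s_Lambda_sub_L_phi z :
  L_s_Lambda Lam z -> L_phi (floor_step height_bound) z.
Proof.
  intros [[HL _] Hlam]. pose proof (proj1 HL) as Hirr.
  split; [exact HL|]. intros N HN.
  assert (HN1 : 1 <= INR N) by (apply (le_INR 1); exact HN).
  destruct (Rle_lt_dec (2 ^ S N) (IZR (cf_t z 1))) as [Hbig | Hsmall].
  - exists 2%Z. split; [lia|split].
    + eapply Rle_trans; [|apply floor_step_at_ge, height_bound_growing].
      unfold height_bound. pose proof (exp_pos ((INR N + 1) ^ (2 * K N + 1))). lra.
    + exact (dist_int_two_mul_le z Hirr N Hbig).
  - assert (Hln1 : ln (IZR (cf_t z 1)) <= INR N + 1).
    { apply Rle_trans with (ln (2 ^ S N)).
      - apply ln_le; [|lra]. apply Rlt_le_trans with 1; [lra|apply (cf_err_bounds z Hirr 0)].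
      - rewrite ln_pow, S_INR by lra.
        assert (ln 2 <= 1) by (rewrite <- (ln_exp 1); apply ln_le; [lra|];
                               pose proof (exp_ineq1_le 1); lra).
        assert (0 <= ln 2) by (rewrite <- ln_1; apply ln_le; lra). nra. }
    assert (Hstep : forall j, (1 <= j)%nat -> cf_omega z j < INR N ->
              ln (IZR (cf_t z (S j))) <= INR N * ln (IZR (cf_t z j))).
    { intros j Hj Hwj.
      pose proof (ln_cf_t_succ_le z Hirr j (omega_pos z (fun i => i) j Hlam Hj)).
      pose proof (ln_cf_t_ge0 z Hirr j). nra. }
    assert (Hhit : forall j, (1 + K N <= j)%nat -> INR N <= cf_omega z j)
      by (intros j Hj; apply (omega_ge_of_threshold z (fun i => i)); [exact Hlam|lia|lia]).
    destruct (hit_with_geometric_bound (fun j => ln (IZR (cf_t z j))) (cf_omega z)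
               (INR N) (INR N + 1) (INR N) 1 (K N) HN1 ltac:(lra) Hln1 Hstep Hhit)
      as [k [_ [Hwk HLk]]].
    apply (good_q_of_convergent z k N Hirr HN Hwk).
    eapply Rle_trans; [exact HLk|]. apply pow_mul_le_succ_pow; nra.
Qed.

(* Beyond [i0], [ln t_(v (j+1)) <= C ln t_(v j + 1) <= C omega(v j) ln t_(v j)],
   so the same growth argument applies along [v] once [N] dominates [|C| + 1]
   and [ln t] at the starting index. *)
Lemma L_ss_Lambda_sub_L_phi_star z :
  L_ss_Lambda Lam z -> L_phi_star (floor_step height_bound) z.
Proof.
  intros [HL [v [[_ [_ [C [i0 Hlim]]]] Hlam]]]. pose proof (proj1 HL) as Hirr.
  split; [exact HL|].
  set (i1 := Nat.max i0 1).
  destruct (INR_archimed 1 (Rmax (Rabs C + 1) (ln (IZR (cf_t z (v i1))))) Rlt_0_1)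
    as [N0 HN0].
  rewrite Rmult_1_r in HN0.
  exists N0. intros N HN HNN0.
  assert (HN1 : 1 <= INR N) by (apply (le_INR 1); exact HN).
  apply le_INR in HNN0.
  pose proof (Rmax_l (Rabs C + 1) (ln (IZR (cf_t z (v i1))))).
  pose proof (Rmax_r (Rabs C + 1) (ln (IZR (cf_t z (v i1))))).
  pose proof (Rabs_pos C).
  assert (Hstep : forall j, (i1 <= j)%nat -> cf_omega z (v j) < INR N ->
            ln (IZR (cf_t z (v (S j)))) <= (Rabs C + 1) * INR N * ln (IZR (cf_t z (v j)))).
  { intros j Hj Hwj.
    pose proof (ln_cf_t_succ_le z Hirr (v j) (omega_pos z v j Hlam ltac:(lia))).
    pose proof (ln_cf_t_ge0 z Hirr (v j)) as HLj.
    pose proof (ln_cf_t_ge0 z Hirr (S (v j))).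
    assert (Hsucc : ln (IZR (cf_t z (S (v j)))) <= INR N * ln (IZR (cf_t z (v j)))) by nra.
    assert (Habs : C * ln (IZR (cf_t z (S (v j)))) <= Rabs C * ln (IZR (cf_t z (S (v j)))))
      by (apply Rmult_le_compat_r; [lra|apply Rle_abs]).
    pose proof (Hlim j ltac:(lia)) as Hj'. simpl in Hj'.
    assert (0 <= INR N * ln (IZR (cf_t z (v j)))) by nra.
    nra. }
  assert (Hhit : forall j, (i1 + K N <= j)%nat -> INR N <= cf_omega z (v j))
    by (intros j Hj; apply (omega_ge_of_threshold z v); [exact Hlam|lia|lia]).
  assert (HB : 1 <= (Rabs C + 1) * INR N) by nra.
  assert (Hstart : ln (IZR (cf_t z (v i1))) <= INR N) by lra.
  destruct (hit_with_geometric_bound (fun j => ln (IZR (cf_t z (v j))))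
              (fun j => cf_omega z (v j)) ((Rabs C + 1) * INR N) (INR N) (INR N)
              i1 (K N) HB ltac:(lra) Hstart Hstep Hhit) as [k [_ [Hwk HLk]]].
  apply (good_q_of_convergent z (v k) N Hirr HN Hwk).
  eapply Rle_trans; [exact HLk|]. apply pow_mul_le_succ_pow; nra.
Qed.

End Construction.

Theorem proposition3p8 (Lam : R -> R)
  (HLam1 : forall x, 1 <= x -> 1 <= Lam x)
  (HLammono : forall x y, 1 <= x -> x <= y -> Lam x <= Lam y)
  (HLaminf : forall M, exists X, 1 <= X /\ forall x, X <= x -> M <= Lam x) :
  (exists phi : R -> R, InPhi phi /\
     forall z, L_s_Lambda Lam z -> L_phi phi z) /\
  (exists psi : R -> R, InPhi psi /\
     (forall z, L_s_Lambda Lam z -> L_ss_Lambda Lam z) /\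
     (forall z, L_ss_Lambda Lam z -> L_phi_star psi z)).
Proof.
  destruct (monotone_threshold (fun n k => forall x, INR k <= x -> INR n <= Lam x))
    as [K [K_mono K_spec]].
  - intro n. destruct (HLaminf (INR n)) as [X [_ HX]].
    destruct (INR_archimed 1 X Rlt_0_1) as [k Hk]. rewrite Rmult_1_r in Hk.
    exists k. intros x Hx. apply HX. lra.
  - intros n k k' Hkk' Hk x Hx. apply Hk. apply le_INR in Hkk'. lra.
  - pose proof (InPhi_height_bound K K_mono) as Hphi.
    split; exists (floor_step (height_bound K)); split; try exact Hphi.
    + exact (L_s_Lambda_sub_L_phi Lam HLam1 K K_mono K_spec).
    + split; [exact (L_s_Lambda_sub_L_ss_Lambda Lam)|].
      exact (L_ss_Lambda_sub_L_phi_star Lam HLam1 K K_mono K_spec).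
Qed.
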